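(* $S\mathbb{R}^{n\times n\times p}_+=(S\mathbb{R}^{n\times n\times p}_+)^*$, where the dual cone is taken in the space $S\mathbb{R}^{n\times n\times p}$ with respect to the inner product $\langle\cdot,\cdot\rangle$, i.e. $(S\mathbb{R}^{n\times n\times p}_+)^*=\{\mathcal{B}\in S\mathbb{R}^{n\times n\times p}:\langle\mathcal{A},\mathcal{B}\rangle\ge0\ \text{for all}\ \mathcal{A}\in S\mathbb{R}^{n\times n\times p}_+\}$.
   Context: For $\mathcal{A}\in\mathbb{R}^{m\times n\times p}$ let $A^{(k)}\in\mathbb{R}^{m\times n}$ ($k\in[p]$) be its frontal slices, $(A^{(k)})_{ij}=a_{ijk}$. $\mathrm{bcirc}(\mathcal{A})\in\mathbb{R}^{mp\times np}$ is the block circulant matrix whose $(i,j)$ block ($i,j\in[p]$) is $A^{(((i-j)\bmod p)+1)}$. $\mathrm{unfold}(\mathcal{A})$ stacks $A^{(1)},\dots,A^{(p)}$ vertically, $\mathrm{fold}$ is its inverse, and the T-product is $\mathcal{A}*\mathcal{B}=\mathrm{fold}(\mathrm{bcirc}(\mathcal{A})\,\mathrm{unfold}(\mathcal{B}))$. The transpose $\mathcal{A}^\top$ has frontal slices $(A^{(1)})^\top,(A^{(p)})^\top,\dots,(A^{(2)})^\top$; $S\mathbb{R}^{n\times n\times p}$ is the set of $\mathcal{A}\in\mathbb{R}^{n\times n\times p}$ with $\mathcal{A}^\top=\mathcal{A}$. The inner product is $\langle\mathcal{A},\mathcal{B}\rangle=\sum a_{ijk}b_{ijk}$. $S\mathbb{R}^{n\times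 n\times p}_+$ is the set of symmetric T-positive semidefinite tensors: $\mathcal{A}\in S\mathbb{R}^{n\times n\times p}$ with $\langle\mathcal{X},\mathcal{A}*\mathcal{X}\rangle\ge0$ for all $\mathcal{X}\in\mathbb{R}^{n\times1\times p}$. *)

From HB Require Import structures.
From mathcomp Require Import all_boot all_order all_algebra.
Set Implicit Arguments. Unset Strict Implicit. Unset Printing Implicit Defensive.
Import Order.TTheory GRing.Theory Num.Theory.
Local Open Scope ring_scope.

(* A third-order tensor in R^{m x n x p}, represented by its p frontal
   slices A^{(k)} in R^{m x n}; slices are indexed 0-based by k : 'I_p,
   so slice k here is A^{(k+1)} in the paper, and entry a_{ijk} is
   (A k) i j. *)
Definition tensor (R : Type) (m n p : nat) := {ffun 'I_p -> 'M[R]_(m, n)}.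

(* slice access with a natural-number index (zero outside the range) *)
Definition slice (R : pzRingType) m n p (A : tensor R m n p) (k : nat)
  : 'M[R]_(m, n) :=
  match @insub nat (fun k => k < p)%N _ k with
  | Some i => A i | None => 0 end.

(* T-product A * B = fold(bcirc(A) unfold(B)).  Block (i,j) of bcirc(A)
   is A^{(((i-j) mod p)+1)}, so frontal slice k of the product is
   sum_j A^{((k-j) mod p)} B^{(j)} (0-based indices). *)
Definition tprod (R : pzRingType) m n q p (A : tensor R m n p)
  (B : tensor R n q p) : tensor R m q p :=
  [ffun k : 'I_p => \sum_(j < p) slice A ((k + p - j) %% p) *m B j].

(* Tensor transpose: slices (A^(1))^T, (A^(p))^T, ..., (A^(2))^T,
   i.e. 0-based slice k is (A^{((p - k) mod p)})^T. *)
Definition ttr (R : pzRingType) m n p (A : tensor R m n p) : tensor R n m p :=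
  [ffun k : 'I_p => (slice A ((p - k) %% p))^T].

Definition tinner (R : pzRingType) m n p (A B : tensor R m n p) : R :=
  \sum_(k < p) \sum_(i < m) \sum_(j < n) A k i j * B k i j.

Definition tsym (R : pzRingType) n p (A : tensor R n n p) : Prop := ttr A = A.

Definition tpsd (R : numDomainType) n p (A : tensor R n n p) : Prop :=
  tsym A /\ forall X : tensor R n 1 p, 0 <= tinner X (tprod A X).

Definition tpsd_dual (R : numDomainType) n p (B : tensor R n n p) : Prop :=
  tsym B /\ forall A : tensor R n n p, tpsd A -> 0 <= tinner A B.

From HB Require Import structures.
From mathcomp Require Import all_boot all_order all_algebra.
From mathcomp Require Import ring.
Set Implicit Arguments. Unset Strict Implicit. Unset Printing Implicit Defensive.
Import Order.TTheory GRing.Theory Num.Theory.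
Local Open Scope ring_scope.

(* The T-product by A is multiplication by the block circulant matrix
   bcirc(A).  Indexing the rows and columns of bcirc(A) by pairs
   (slice, row) we get, for every tensor X with vectorization x,
     <X, A * X> = x^T bcirc(A) x     and     <bcirc A, bcirc B> = p <A, B>.
   Hence A is T-psd iff bcirc(A) is a psd matrix, and A is symmetric iff
   bcirc(A) is.  The theorem then follows from two facts:
   - (psd => dual) the Frobenius product of two psd matrices, one of them
     symmetric, is nonnegative.  This is proved below over an arbitrary
     finite index type by peeling off rank-one terms (Schur complements)
     one pivot at a time, without any spectral theory;
   - (dual => psd) for every X the T-product X * X^T is a symmetric T-psd
     tensor and <X * X^T, B> = <X, B * X>. *)

Section QuadraticForms.
Variables (R : numFieldType) (I : finType).
Implicit Types (M N : I -> I -> R) (u v x : I -> R).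

Definition qform N u v := \sum_i \sum_j u i * N i j * v j.

Definition psd N := forall x, 0 <= qform N x x.
Definition symmetric N := forall i j, N i j = N j i.

Definition frobenius M N := \sum_i \sum_j M i j * N i j.

Definition unit_vec (k : I) : I -> R := fun i => (i == k)%:R.

Lemma sum_unit_vec (F : I -> R) k : \sum_m F m * unit_vec k m = F k.
Proof.
rewrite (bigD1 k) //= /unit_vec eqxx mulr1 big1 ?addr0 // => m /negPf ->.
by rewrite mulr0.
Qed.

Lemma qformDl N u1 u2 v :
  qform N (fun i => u1 i + u2 i) v = qform N u1 v + qform N u2 v.
Proof.
rewrite /qform -big_split; apply: eq_bigr => i _; rewrite -big_split.
by apply: eq_bigr => j _ /=; ring.
Qed.

Lemma qformDr N u v1 v2 :
  qform N u (fun i => v1 i + v2 i) = qform N u v1 + qform N u v2.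
Proof.
rewrite /qform -big_split; apply: eq_bigr => i _; rewrite -big_split.
by apply: eq_bigr => j _ /=; ring.
Qed.

Lemma qformZl N a u v : qform N (fun i => a * u i) v = a * qform N u v.
Proof.
rewrite /qform mulr_sumr; apply: eq_bigr => i _; rewrite mulr_sumr.
by apply: eq_bigr => j _ /=; ring.
Qed.

Lemma qformZr N a u v : qform N u (fun i => a * v i) = a * qform N u v.
Proof.
rewrite /qform mulr_sumr; apply: eq_bigr => i _; rewrite mulr_sumr.
by apply: eq_bigr => j _ /=; ring.
Qed.

Lemma qform_unitl N k v : qform N (unit_vec k) v = \sum_j N k j * v j.
Proof.
rewrite /qform -(sum_unit_vec (fun i => \sum_j N i j * v j) k).
apply: eq_bigr => i _; rewrite mulr_suml; apply: eq_bigr => j _ /=; ring.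
Qed.

Lemma qform_unitr N u k : qform N u (unit_vec k) = \sum_i u i * N i k.
Proof. by apply: eq_bigr => i _; rewrite sum_unit_vec. Qed.

Lemma qform_plane N a b i j :
  let x := fun l => a * unit_vec i l + b * unit_vec j l in
  qform N x x = a * a * N i i + a * b * N i j + b * a * N j i + b * b * N j j.
Proof.
rewrite /= qformDl !qformDr !qformZl !qformZr !qform_unitl !sum_unit_vec.
by rewrite -!(sum_unit_vec (N _) _) /unit_vec; ring.
Qed.

Lemma psd_diag_ge0 N : psd N -> forall i, 0 <= N i i.
Proof.
move=> psdN i; have := psdN (fun l => 1 * unit_vec i l + 0 * unit_vec i l).
by rewrite qform_plane !mul0r !mulr0 !addr0 !mul1r mul0r addr0.
Qed.

(* A zero diagonal entry of a symmetric psd matrix kills its whole row: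
   otherwise the form is negative somewhere on the plane of e_i, e_j. *)
Lemma psd_zero_row N i :
  psd N -> symmetric N -> N i i = 0 -> forall j, N i j = 0.
Proof.
move=> psdN symN Nii0 j; have [//|Nij0] := eqVneq (N i j) 0; exfalso.
set t := - (N j j + 1) / (2 * N i j).
have := psdN (fun l => t * unit_vec i l + 1 * unit_vec j l).
rewrite qform_plane Nii0 (symN j i).
suff -> : t * t * 0 + t * 1 * N i j + 1 * t * N i j + 1 * 1 * N j j = -1.
  by rewrite ler0N1.
by rewrite /t; field.
Qed.

Definition schur N k : I -> I -> R := fun i j => N i j - N i k * N j k / N k k.

Lemma schur_symmetric N k : symmetric N -> symmetric (schur N k).
Proof. by move=> symN i j; rewrite /schur symN (mulrC (N i k)). Qed.

(* Since x^T (schur N k) x = y^T N y with y = x - (c^T x / N_kk) e_k,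
   Schur complements of psd matrices are psd. *)
Lemma schur_psd N k : psd N -> symmetric N -> N k k != 0 -> psd (schur N k).
Proof.
move=> psdN symN Nkk0 x; set s := \sum_j x j * N j k.
have -> : qform (schur N k) x x = qform N x x - s * s / N k k.
  rewrite /qform /s mulr_suml mulr_suml -sumrB; apply: eq_bigr => i _.
  rewrite mulr_sumr mulr_suml -sumrB; apply: eq_bigr => j _ /=.
  by rewrite /schur; field.
have := psdN (fun l => x l + (- (s / N k k)) * unit_vec k l).
rewrite qformDl !qformDr !qformZl !qformZr !qform_unitl !qform_unitr.
rewrite sum_unit_vec.
have -> : \sum_j N k j * x j = s by apply: eq_bigr => j _; rewrite symN mulrC.
have -> : \sum_i x i * N i k = s by [].
by congr (0 <= _); field.
Qed.

Lemma frobenius_schur M N k : N k k != 0 ->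
  frobenius M N = frobenius M (schur N k) + qform M (N^~ k) (N^~ k) / N k k.
Proof.
move=> Nkk0; rewrite /frobenius /qform mulr_suml -big_split.
apply: eq_bigr => i _; rewrite mulr_suml -big_split.
by apply: eq_bigr => j _ /=; rewrite /schur; field.
Qed.

Definition rows_in N (S : {set I}) := forall i j, i \notin S -> N i j = 0.

Lemma schur_rows_in N S k : symmetric N -> N k k != 0 ->
  rows_in N S -> rows_in (schur N k) (S :\ k).
Proof.
move=> symN Nkk0 NS i j; rewrite in_setD1 negb_and negbK.
case/orP=> [/eqP -> | iS]; first by rewrite /schur mulrAC divff // mul1r symN subrr.
by rewrite /schur !(NS i) // !mul0r subrr.
Qed.

(* Induction on the number of rows where N may be nonzero: a zero pivot
   has a zero row and can be dropped; a positive pivot splits N into its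
   Schur complement, supported on fewer rows, and the rank-one term
   c c^T / N_kk, whose Frobenius product with M is q_M(c) / N_kk >= 0. *)
Lemma frobenius_psd_rows_in M N S : psd M -> psd N -> symmetric N ->
  rows_in N S -> 0 <= frobenius M N.
Proof.
move=> psdM; move: {2}#|S| (erefl #|S|) => n.
elim: n S N => [|n IH] S N cardS psdN symN NS.
  have S0 : S = set0 by apply/eqP; rewrite -cards_eq0 cardS.
  rewrite /frobenius big1 // => i _; rewrite big1 // => j _.
  by rewrite NS ?mulr0 // S0 in_set0.
have [k kS] : exists k, k \in S by apply/card_gt0P; rewrite cardS.
have cardSk : #|S :\ k| = n by move: cardS; rewrite (cardsD1 k) kS add1n => -[].
have [Nkk0 | Nkk_neq0] := eqVneq (N k k) 0.
  apply: (IH (S :\ k) N) => // i j.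
  rewrite in_setD1 negb_and negbK => /orP [/eqP -> | /NS -> //].
  exact: psd_zero_row.
have Nkk_gt0 : 0 < N k k by rewrite lt_def Nkk_neq0 psd_diag_ge0.
rewrite (frobenius_schur M Nkk_neq0); apply: addr_ge0.
  apply: (IH (S :\ k)) => //.
  - exact: schur_psd.
  - exact: schur_symmetric.
  - exact: schur_rows_in.
by rewrite divr_ge0 // ltW.
Qed.

Lemma frobenius_psd_ge0 M N : psd M -> psd N -> symmetric N ->
  0 <= frobenius M N.
Proof.
move=> psdM psdN symN; apply: (frobenius_psd_rows_in (S := setT)) => // i j.
by rewrite in_setT.
Qed.

End QuadraticForms.

Section BlockCirculant.
Variable R : realFieldType.

Lemma sliceE m n p (A : tensor R m n p.+1) (k : 'I_p.+1) : slice A k = A k.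
Proof. by rewrite /slice insubT // => k_lt; congr (A _); exact: val_inj. Qed.

Lemma tprodE m n q p (A : tensor R m n p.+1) (X : tensor R n q p.+1) k :
  tprod A X k = \sum_j A (k - j) *m X j.
Proof.
rewrite ffunE; apply: eq_bigr => j _; rewrite -sliceE /= modnDmr addnBA //.
exact: ltnW.
Qed.

Lemma ttrE m n p (A : tensor R m n p.+1) k : ttr A k = (A (- k))^T.
Proof. by rewrite ffunE -sliceE. Qed.

Lemma sum_pair (T1 T2 : finType) (F : T1 * T2 -> R) :
  \sum_u F u = \sum_a \sum_b F (a, b).
Proof. by rewrite pair_big; apply: eq_bigr => -[]. Qed.

Variables n p : nat.
Local Notation P := p.+1.
Local Notation I := ('I_P * 'I_n)%type.

Definition bcirc (A : tensor R n n P) : I -> I -> R :=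
  fun u v => A (u.1 - v.1) u.2 v.2.

Definition tvec (X : tensor R n 1 P) : I -> R := fun u => X u.1 u.2 0.

Lemma tinner_tprod A X : tinner X (tprod A X) = qform (bcirc A) (tvec X) (tvec X).
Proof.
rewrite /tinner /qform sum_pair; apply: eq_bigr => k _; apply: eq_bigr => i _.
rewrite big_ord1 sum_pair tprodE summxE mulr_sumr; apply: eq_bigr => j _.
rewrite mxE mulr_sumr; apply: eq_bigr => l _.
by rewrite /bcirc /tvec /= mulrA.
Qed.

(* Every vector indexed by I is the unfolding of a lateral slice. *)
Lemma psd_bcirc A :
  (forall X : tensor R n 1 P, 0 <= tinner X (tprod A X)) -> psd (bcirc A).
Proof.
move=> psdA x; pose X : tensor R n 1 P := [ffun k => \col_i x (k, i)].
have tvecX u : tvec X u = x u by case: u => k i; rewrite /tvec ffunE mxE.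
suff <- : qform (bcirc A) (tvec X) (tvec X) = qform (bcirc A) x x.
  by rewrite -tinner_tprod.
by apply: eq_bigr => u _; apply: eq_bigr => v _; rewrite !tvecX.
Qed.

Lemma tsymE (A : tensor R n n P) : tsym A -> forall k i l, A k i l = A (- k) l i.
Proof.
move=> symA k i l; have := congr1 (fun T : tensor R n n P => T k i l) symA.
by rewrite /= ttrE mxE => <-.
Qed.

Lemma symmetric_bcirc A : tsym A -> symmetric (bcirc A).
Proof. by move=> symA u v; rewrite /bcirc (tsymE symA) opprB. Qed.

(* Each slice of A occurs p times in bcirc(A), once in each block row. *)
Lemma frobenius_bcirc A B : frobenius (bcirc A) (bcirc B) = P%:R * tinner A B.
Proof.
transitivity (\sum_k \sum_j \sum_i \sum_l A (k - j) i l * B (k - j) i l).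
  rewrite /frobenius sum_pair; apply: eq_bigr => k _.
  under eq_bigr => i _ do rewrite sum_pair.
  by rewrite exchange_big; apply: eq_bigr => j _; apply: eq_bigr => i _.
rewrite mulr_natl -[X in _ *+ X](card_ord P) -sumr_const; apply: eq_bigr => k _.
rewrite (reindex_inj (@subrI _ k)) /=; apply: eq_bigr => j _.
by rewrite subKr.
Qed.

(* The T-product X * X^T of a lateral slice with its transpose. *)
Definition touter (X : tensor R n 1 P) : tensor R n n P :=
  [ffun m => \matrix_(i, l) \sum_k X k i 0 * X (k - m) l 0].

Lemma touter_sym X : tsym (touter X).
Proof.
apply/ffunP => m; apply/matrixP => i l; rewrite ttrE !mxE !ffunE !mxE.
rewrite [RHS](reindex_inj (addIr m)); apply: eq_bigr => k _ /=.
by rewrite opprK addrK mulrC.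
Qed.

(* <Y, (X * X^T) * Y> = \sum_k (\sum_u y_u X_{k + u.1, u.2})^2. *)
Lemma touter_psd X (Y : tensor R n 1 P) : 0 <= tinner Y (tprod (touter X) Y).
Proof.
rewrite tinner_tprod; set y := tvec Y.
have -> : qform (bcirc (touter X)) y y = \sum_u \sum_v \sum_k
    ((y u * X (k + u.1) u.2 0) * (y v * X (k + v.1) v.2 0)).
  apply: eq_bigr => u _; apply: eq_bigr => v _.
  rewrite /bcirc ffunE mxE (reindex_inj (addIr u.1)) mulr_sumr mulr_suml.
  by apply: eq_bigr => k _ /=; rewrite opprB -addrA subrKC; ring.
under eq_bigr => u _ do rewrite exchange_big.
rewrite exchange_big; apply: sumr_ge0 => k _.
by rewrite -big_distrlr /= -expr2 sqr_ge0.
Qed.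

Lemma tinner_touter X B : tinner (touter X) B = tinner X (tprod B X).
Proof.
rewrite tinner_tprod /qform sum_pair.
transitivity (\sum_k \sum_i \sum_m \sum_l X k i 0 * B m i l * X (k - m) l 0);
    last first.
  apply: eq_bigr => k _; apply: eq_bigr => i _.
  rewrite sum_pair (reindex_inj (@subrI _ k)); apply: eq_bigr => m _.
  by apply: eq_bigr => l _; rewrite /bcirc /tvec /= subKr.
rewrite exchange_big.
under eq_bigr => i _ do rewrite exchange_big.
under eq_bigr => i _ do under eq_bigr => m _ do rewrite exchange_big.
rewrite exchange_big /tinner; apply: eq_bigr => m _; apply: eq_bigr => i _.
apply: eq_bigr => l _; rewrite ffunE mxE mulr_suml; apply: eq_bigr => k _.
by rewrite mulrAC.
Qed.

End BlockCirculant.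

Theorem mainTheorem12 (R : rcfType) (n p : nat) (B : tensor R n n p) :
  tpsd B <-> tpsd_dual B.
Proof.
case: p B => [|p] B.
  (* no slices: every tensor is symmetric and every inner product is 0 *)
  have symB : tsym B by apply/ffunP => -[].
  by split=> _; split=> // *; rewrite /tinner big_ord0.
split=> -[symB psdB]; split=> //.
- (* <A, B> = <bcirc A, bcirc B> / p >= 0 *)
  move=> A [symA psdA].
  have := frobenius_psd_ge0 (psd_bcirc psdA) (psd_bcirc psdB) (symmetric_bcirc symB).
  by rewrite frobenius_bcirc pmulr_rge0 // ltr0Sn.
- (* test B against the symmetric T-psd tensor X * X^T *)
  move=> X; rewrite -tinner_touter; apply: psdB.
  by split; [exact: touter_sym | exact: touter_psd].
Qed.
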